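(* Let $q$ be a nonzero complex number and let ${\mathbb A}={\mathbb F}({\rm SP}_q^{2|1})$ be the super-Hopf algebra generated by even $x, y, x^{-1}$ and odd $\theta$ with relations $x\theta=q\theta x$, $\theta y=qy\theta$, $yx=q^{-2}xy$, $\theta^2=q^{1/2}(q-1)yx$, $xx^{-1}={\bf 1}=x^{-1}x$, and Hopf structure $\Delta(x)=x\otimes x$, $\Delta(\theta)=\theta\otimes{\bf 1}+{\bf 1}\otimes\theta$, $\Delta(y)=x^{-1}\otimes y+y\otimes x^{-1}$, $\epsilon(x)=1$, $\epsilon(\theta)=\epsilon(y)=0$, $S(x)=x^{-1}$, $S(\theta)=-\theta$, $S(y)=-xyx$. Let ${\mathbb U}$ be the dual super-Hopf algebra generated by $K$, $\nabla$, $N$, where the dual pairing $\langle\,,\rangle:{\mathbb U}\times{\mathbb A}\to\mathbb C$ is determined on monomials $f=x^k\theta^l y^n$ by $$\langle K,f\rangle = k\,\delta_{l,0}\delta_{n,0},\quad \langle\nabla,f\rangle=\delta_{l,1},\quad \langle N,f\rangle=\delta_{n,1},\quad \langle 1_{\mathbb U},f\rangle=\epsilon_{\mathbb A}(f)=\delta_{k,0}.$$ Then the generators of ${\mathbb U}$ satisfy $$K\nabla=\nabla K,\quad KN=NK,\quad \nabla N=N\nabla,\quad \nabla^2=0 .$$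
   Context: A dual pairing of super bialgebras ${\mathbb U}$ and ${\mathbb A}$ is a bilinear map $\langle\,,\rangle:{\mathbb U}\times{\mathbb A}\to\mathbb C$ with $\langle u,ab\rangle=\langle\Delta_{\mathbb U}(u),a\otimes b\rangle$, $\langle uv,a\rangle=\langle u\otimes v,\Delta_{\mathbb A}(a)\rangle$, $\langle u,1_{\mathbb A}\rangle=\epsilon_{\mathbb U}(u)$, $\langle 1_{\mathbb U},a\rangle=\epsilon_{\mathbb A}(a)$, extended to tensor products by $\langle u\otimes v,a\otimes b\rangle=(-1)^{\tau(v)\tau(a)}\langle u,a\rangle\langle v,b\rangle$, where $\tau$ denotes the $\mathbb Z_2$-grade ($\theta$ and $\nabla$ odd, the other generators even). The product in ${\mathbb U}$ is thus determined by the coproduct of ${\mathbb A}$ via the pairing. Tensor products of superalgebras use the graded product $(a_1\otimes a_2)(a_3\otimes a_4)=(-1)^{\tau(a_2)\tau(a_3)}a_1a_3\otimes a_2a_4$. *)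

From HB Require Import structures.
From mathcomp Require Import all_boot all_order all_algebra.
From mathcomp Require Import reals Rstruct.
From mathcomp.real_closed Require Import complex.
Set Implicit Arguments. Unset Strict Implicit. Unset Printing Implicit Defensive.
Import Order.TTheory GRing.Theory Num.Theory.
Local Open Scope ring_scope.

Definition Cplx : fieldType := complex Rdefinitions.R.

Section SPq.
Variable F : fieldType.
(* q and a chosen square root s = q^{1/2} *)
Variables q s : F.

(* A PBW monomial x^k theta^l y^n of A, encoded as (k, l, n). *)
Definition mono := (int * bool * nat)%type.
Definition mk (k : int) (l : bool) (n : nat) : mono := (k, l, n).
Definition mexp (m : mono) : int := m.1.1.
Definition mth (m : mono) : bool := m.1.2.
Definition mey (m : mono) : nat := m.2.
Definition mgrade (m : mono) : bool := mth m.

Definition one : mono := mk 0 false 0.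

(* Product of two monomials in A, normal ordered using the relations
   x theta = q theta x, theta y = q y theta, y x = q^-2 x y,
   theta^2 = q^{1/2}(q-1) y x, x x^-1 = 1 = x^-1 x. *)
Definition mono_mul (m1 m2 : mono) : F * mono :=
  let a := mexp m1 in let b := mth m1 in let c := mey m1 in
  let d := mexp m2 in let e := mth m2 in let f := mey m2 in
  let coef := q ^ (- (2%:Z * c%:Z * d)) * q ^ (- ((b : nat)%:Z * d))
              * q ^ (- (c%:Z * (e : nat)%:Z)) in
  if b && e then
    (coef * (s * (q - 1) * q ^ (-2)), mk (a + d + 1) false (c + f).+1)
  else (coef, mk (a + d) (b || e) (c + f)).

(* An element of A (x) A as a formal sum of terms  c * (a (x) b). *)
Definition term := (F * mono * mono)%type.

(* graded product (a1 (x) a2)(a3 (x) a4) = (-1)^{tau a2 tau a3} a1 a3 (x) a2 a4 *)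
Definition term_mul (t1 t2 : term) : term :=
  let: (c1, a1, a2) := t1 in let: (c2, a3, a4) := t2 in
  let: (u, b1) := mono_mul a1 a3 in let: (v, b2) := mono_mul a2 a4 in
  ((-1) ^+ (mgrade a2 && mgrade a3) * c1 * c2 * u * v, b1, b2).

Definition tmul (s1 s2 : seq term) : seq term :=
  [seq term_mul t1 t2 | t1 <- s1, t2 <- s2].

Definition Delta_xk (k : int) : seq term := [:: (1, mk k false 0, mk k false 0)].
Definition Delta_theta : seq term :=
  [:: (1, mk 0 true 0, one); (1, one, mk 0 true 0)].
Definition Delta_y : seq term :=
  [:: (1, mk (-1) false 0, mk 0 false 1); (1, mk 0 false 1, mk (-1) false 0)].

(* Delta(x^k theta^l y^n) = Delta(x)^k Delta(theta)^l Delta(y)^n,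
   Delta being a superalgebra morphism into A (x) A. *)
Definition Delta (m : mono) : seq term :=
  iter (mey m) (fun acc => tmul acc Delta_y)
       (tmul (Delta_xk (mexp m)) (if mth m then Delta_theta else [:: (1, one, one)])).

(* Elements of U are represented by their values <u, f> on the monomial basis.
   Product in U:  <u v, f> = <u (x) v, Delta f>, with
   <u (x) v, a (x) b> = (-1)^{tau v tau a} <u,a><v,b>; [tv] is the grade of v. *)
Definition Ufun := mono -> F.
Definition Umul (u v : Ufun) (tv : bool) : Ufun := fun f =>
  \sum_(t <- Delta f) (-1) ^+ (tv && mgrade t.1.2) * t.1.1 * u t.1.2 * v t.2.

End SPq.

Definition UK {F : fieldType} : Ufun F :=
  fun f => if (~~ mth f) && (mey f == 0%N) then (mexp f)%:~R else 0.
Definition Unabla {F : fieldType} : Ufun F := fun f => (mth f)%:R.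
Definition UN {F : fieldType} : Ufun F := fun f => (mey f == 1%N)%:R.
(* grades: K even, nabla odd, N even *)

(** The coproduct of A is super-cocommutative: the coproducts of x, theta and y
    are invariant under the super flip a (x) b |-> (-1)^(|a||b|) b (x) a, and the
    flip is a morphism of the graded tensor square.  Concretely, the coproduct
    of x^k theta^l y^n is that of x^k theta^l multiplied n times on the right by
    Delta(y), and the transpose of this multiplication, acting on bilinear forms,
    commutes with the flip.  Dually, U is supercommutative on homogeneous
    elements: K is even and nabla is odd, so K, nabla and N pairwise commute and
    nabla^2 = -nabla^2 = 0. *)
From HB Require Import structures.
From mathcomp Require Import all_boot all_order all_algebra ring.
From mathcomp Require Import reals Rstruct.
From mathcomp.real_closed Require Import complex.
Set Implicit Arguments.
Unset Strict Implicit.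
Unset Printing Implicit Defensive.
Import GRing.Theory.

Local Open Scope ring_scope.

Section Supercommutativity.
Variable F : fieldType.
Variables q s : F.

Definition form := mono -> mono -> F.

Definition eval_terms (ts : seq (term F)) (P : form) : F :=
  \sum_(t <- ts) t.1.1 * P t.1.2 t.2.

Definition sflip (P : form) : form :=
  fun a b => (-1) ^+ (mgrade a && mgrade b) * P b a.

(* The factor q^(2n + l) comes from normal ordering x^k theta^l y^n * x^-1. *)
Definition mulDy_adj (P : form) : form := fun a b =>
    q ^+ (2 * mey a + mth a) *
      P (mk (mexp a - 1) (mth a) (mey a)) (mk (mexp b) (mth b) (mey b).+1)
  + q ^+ (2 * mey b + mth b) *
      P (mk (mexp a) (mth a) (mey a).+1) (mk (mexp b - 1) (mth b) (mey b)).

Lemma mono_mul_xV (a : mono) :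
  mono_mul q s a (mk (-1) false 0) =
  (q ^+ (2 * mey a + mth a), mk (mexp a - 1) (mth a) (mey a)).
Proof.
case: a => [[k l] n]; rewrite /mono_mul /mexp /mth /mey /= andbF orbF addn0.
have -> : - (2%:Z * n%:Z * -1) = (2 * n)%N :> int by rewrite mulrN1 opprK PoszM.
have -> : - ((l : nat)%:Z * -1) = (l : nat) :> int by rewrite mulrN1 opprK.
by rewrite mulr0 oppr0 expr0z mulr1 -exprD.
Qed.

Lemma mono_mul_y (a : mono) :
  mono_mul q s a (mk 0 false 1) = (1, mk (mexp a) (mth a) (mey a).+1).
Proof.
case: a => [[k l] n]; rewrite /mono_mul /mexp /mth /mey /= andbF orbF addn1 addr0.
by rewrite !mulr0 oppr0 !expr0z !mulr1.
Qed.

Lemma eval_tmul_Delta_y (ts : seq (term F)) (P : form) :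
  eval_terms (tmul q s ts (Delta_y F)) P = eval_terms ts (mulDy_adj P).
Proof.
rewrite /eval_terms /tmul big_allpairs_dep; apply: eq_bigr => -[[c a] b] _.
rewrite !big_cons big_nil /= /term_mul !mono_mul_xV !mono_mul_y /= andbF /mulDy_adj.
ring.
Qed.

Lemma eval_Delta (f : mono) (P : form) :
  eval_terms (Delta q s f) P =
  eval_terms (Delta q s (mk (mexp f) (mth f) 0)) (iter (mey f) mulDy_adj P).
Proof.
rewrite /Delta /=; elim: (mey f) P => [|n IHn] P //=.
by rewrite eval_tmul_Delta_y IHn -iterSr.
Qed.

Lemma eq_eval_terms (ts : seq (term F)) {P Q : form} :
  P =2 Q -> eval_terms ts P = eval_terms ts Q.
Proof. by move=> eqPQ; apply: eq_bigr => t _; rewrite eqPQ. Qed.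

Lemma eq_mulDy_adj {P Q : form} : P =2 Q -> mulDy_adj P =2 mulDy_adj Q.
Proof. by move=> eqPQ a b; rewrite /mulDy_adj !eqPQ. Qed.

Lemma mulDy_adj_sflip (P : form) : mulDy_adj (sflip P) =2 sflip (mulDy_adj P).
Proof. by move=> a b; rewrite /mulDy_adj /sflip /=; ring. Qed.

Lemma iter_mulDy_adj_sflip n (P : form) :
  iter n mulDy_adj (sflip P) =2 sflip (iter n mulDy_adj P).
Proof.
elim: n => [|n IHn] a b //=.
by rewrite (eq_mulDy_adj IHn) mulDy_adj_sflip.
Qed.

Lemma Delta_x_theta k l :
  Delta q s (mk k l 0) =
  if l then [:: (1, mk k true 0, mk k false 0); (1, mk k false 0, mk k true 0)]
  else [:: (1, mk k false 0, mk k false 0)].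
Proof.
by case: l; rewrite /Delta /tmul /= /mexp /mth /mey /=
  !(mulr0, mul0r, oppr0, expr0z, addr0, mulr1).
Qed.

Lemma eval_Delta_x_theta_sflip k l (P : form) :
  eval_terms (Delta q s (mk k l 0)) (sflip P) = eval_terms (Delta q s (mk k l 0)) P.
Proof.
rewrite Delta_x_theta /eval_terms /sflip; case: l; rewrite !big_cons !big_nil /= expr0.
  by rewrite !(addr0, mul1r) addrC.
by rewrite mul1r.
Qed.

Lemma eval_Delta_sflip (f : mono) (P : form) :
  eval_terms (Delta q s f) (sflip P) = eval_terms (Delta q s f) P.
Proof.
rewrite [LHS]eval_Delta [RHS]eval_Delta (eq_eval_terms _ (iter_mulDy_adj_sflip _ _)).
exact: eval_Delta_x_theta_sflip.
Qed.

Definition homogeneous (u : Ufun F) (t : bool) := forall a, mgrade a != t -> u a = 0.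

Lemma homogeneous_UK : homogeneous UK false.
Proof. by case=> [[k []] n]. Qed.

Lemma homogeneous_Unabla : homogeneous Unabla true.
Proof. by case=> [[k []] n]. Qed.

Lemma Umul_eval_terms (u v : Ufun F) tv f :
  Umul q s u v tv f =
  eval_terms (Delta q s f) (fun a b => (-1) ^+ (tv && mgrade a) * u a * v b).
Proof. by apply: eq_bigr => t _; ring. Qed.

(* [v] need not be homogeneous (N is not), and [tv] only enters through the sign. *)
Lemma Umul_supercomm (u : Ufun F) tu : homogeneous u tu -> forall v tv f,
  Umul q s u v tv f = (-1) ^+ (tu && tv) * Umul q s v u tu f.
Proof.
move=> hom_u v tv f.
rewrite !Umul_eval_terms -eval_Delta_sflip /eval_terms big_distrr /=.
apply: eq_bigr => t _; rewrite /sflip; set a := t.1.2; set b := t.2.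
have [/hom_u->|/negPn/eqP->] := boolP (mgrade b != tu); first by rewrite !(mulr0, mul0r).
by case: tu tv (mgrade a) {hom_u} => -[] []; rewrite /=; ring.
Qed.

Lemma Umul_sqr_odd (u : Ufun F) f : 2 != 0 :> F -> homogeneous u true ->
  Umul q s u u true f = 0.
Proof.
move=> two_neq0 hom_u; have /eqP := Umul_supercomm hom_u u true f.
rewrite expr1 mulN1r -subr_eq0 opprK -mulr2n -mulr_natr mulf_eq0.
by rewrite (negbTE two_neq0) orbF => /eqP.
Qed.

End Supercommutativity.

Lemma Cplx_two_neq0 : (2 : Cplx) != 0.
Proof. by rewrite (@Num.Theory.pnatr_eq0 (complex Rdefinitions.R) 2). Qed.

Theorem theorem4p1 (q s : Cplx) :
  q != 0 -> s ^+ 2 = q ->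
  (forall f : mono, Umul q s UK Unabla true f = Umul q s Unabla UK false f) /\
  (forall f : mono, Umul q s UK UN false f = Umul q s UN UK false f) /\
  (forall f : mono, Umul q s Unabla UN false f = Umul q s UN Unabla true f) /\
  (forall f : mono, Umul q s Unabla Unabla true f = 0).
Proof.
(* The relations hold for every q and s. *)
move=> _ _; split; [|split; [|split]] => f.
- by rewrite (Umul_supercomm q s (homogeneous_UK _)) mul1r.
- by rewrite (Umul_supercomm q s (homogeneous_UK _)) mul1r.
- by rewrite (Umul_supercomm q s (homogeneous_Unabla _)) mul1r.
- exact: Umul_sqr_odd Cplx_two_neq0 (homogeneous_Unabla _).
Qed.
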